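(* For every $s\in I(\Phi)$ there exists a Weyl chamber $C$ of $\Phi$ which is an S-chamber for $s$, i.e. such that $s(\alpha)\in\Phi^+(C)$ for every $\alpha\in\Phi^+(C)\cap\Phi^s_\star$. Equivalently, $s(\alpha)\in\Phi^+(C)$ for every $\alpha\in\mathcal B(C)\cap\Phi^s_\star$.
   Context: $\Phi$ is a reduced crystallographic root system spanning a real Euclidean space $V$ with inner product $(\cdot|\cdot)$; $A(\Phi)$ is the group of orthogonal maps of $V$ preserving $\Phi$, $I(\Phi)$ its involutions. For $s\in I(\Phi)$: $\Phi^s_\circ=\{\alpha:s\alpha=\alpha\}$, $\Phi^s_\bullet=\{\alpha:s\alpha=-\alpha\}$, $\Phi^s_\star=\Phi\setminus(\Phi^s_\circ\cup\Phi^s_\bullet)$. A Weyl chamber is a connected component $C$ of $\{v\in V:(\alpha|v)\ne0\ \forall\alpha\in\Phi\}$; $\Phi^+(C)=\{\alpha:(\alpha|v)>0\ \forall v\in C\}$ and $\mathcal B(C)$ is the corresponding basis of simple roots. *)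

From HB Require Import structures.
From mathcomp Require Import all_boot all_order all_algebra.
From mathcomp Require Import all_classical all_reals all_analysis.
Set Implicit Arguments. Unset Strict Implicit. Unset Printing Implicit Defensive.
Import Order.TTheory GRing.Theory Num.Theory.
Import numFieldNormedType.Exports.
Local Open Scope classical_set_scope.
Local Open Scope ring_scope.

(* The Euclidean space V is modelled as R^n = 'rV[R]_n with the standard
   inner product (every finite-dimensional real inner product space is
   isometric to such a space). *)
Definition dotv {R : realType} {n : nat} (u v : 'rV[R]_n) : R :=
  \sum_(i < n) u 0 i * v 0 i.

Definition refl {R : realType} {n : nat} (a b : 'rV[R]_n) : 'rV[R]_n :=
  b - ((2 * dotv b a) / dotv a a) *: a.

Definition root_system {R : realType} {n : nat} (Phi : seq 'rV[R]_n) : Prop :=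
  [/\ uniq Phi /\ (0 : 'rV[R]_n) \notin Phi,
      (\sum_(a <- Phi) <<a>> == 1%:M)%MS,
      (forall a b, a \in Phi -> b \in Phi -> refl a b \in Phi),
      (forall a b, a \in Phi -> b \in Phi ->
         (2 * dotv b a) / dotv a a \is a Num.int) &
      (forall a (c : R), a \in Phi -> c *: a \in Phi -> c = 1 \/ c = -1)].

Definition in_A {R : realType} {n : nat} (Phi : seq 'rV[R]_n) (S : 'M[R]_n) : Prop :=
  S *m S^T = 1%:M /\ (forall a, a \in Phi -> a *m S \in Phi).

Definition in_I {R : realType} {n : nat} (Phi : seq 'rV[R]_n) (S : 'M[R]_n) : Prop :=
  in_A Phi S /\ S *m S = 1%:M.

Definition Phi_star {R : realType} {n : nat} (Phi : seq 'rV[R]_n) (S : 'M[R]_n)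
  (a : 'rV[R]_n) : Prop :=
  a \in Phi /\ a *m S <> a /\ a *m S <> - a.

Definition regular_set {R : realType} {n : nat} (Phi : seq 'rV[R]_n) : set 'rV[R]_n :=
  [set v | forall a, a \in Phi -> dotv a v != 0].

Definition weyl_chamber {R : realType} {n : nat} (Phi : seq 'rV[R]_n)
  (C : set 'rV[R]_n) : Prop :=
  exists2 v, regular_set Phi v & C = connected_component (regular_set Phi) v.

Definition pos_roots {R : realType} {n : nat} (Phi : seq 'rV[R]_n)
  (C : set 'rV[R]_n) (a : 'rV[R]_n) : Prop :=
  a \in Phi /\ (forall v, C v -> 0 < dotv a v).

From HB Require Import structures.
From mathcomp Require Import all_boot all_order all_algebra.
From mathcomp Require Import all_classical all_reals all_analysis.
From mathcomp Require Import ring.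
Set Implicit Arguments.
Unset Strict Implicit.
Unset Printing Implicit Defensive.
Import Order.TTheory GRing.Theory Num.Theory.
Import numFieldNormedType.Exports.
Local Open Scope classical_set_scope.
Local Open Scope ring_scope.

(* Pick x avoiding the finitely many hyperplanes (a|x) = 0 and (a + s a|x) = 0,
   and tilt the s-symmetrisation x + s x by a small multiple of x - s x:
   u = (x + s x) + e (x - s x).  Then (a|u) = A + e Q and (s a|u) = A - e Q with
   A = (a + s a|x), Q = (a - s a|x).  If s a <> -a then A <> 0, and for e small
   (a|u) and (s a|u) have the sign of A; if s a = -a then (a|u) = 2 e (a|x) <> 0.
   So u is regular, and the chamber of u is an S-chamber since the sign of each
   root is constant on a chamber. *)

Section DotProduct.
Variables (R : realType) (n : nat).
Implicit Types (a b x y : 'rV[R]_n) (c : R).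

Lemma dotv0l x : dotv 0 x = 0.
Proof. by rewrite /dotv big1 // => i _; rewrite mxE mul0r. Qed.

Lemma dotvDl a b x : dotv (a + b) x = dotv a x + dotv b x.
Proof. by rewrite /dotv -big_split; apply: eq_bigr => i _; rewrite mxE mulrDl. Qed.

Lemma dotvDr a x y : dotv a (x + y) = dotv a x + dotv a y.
Proof. by rewrite /dotv -big_split; apply: eq_bigr => i _; rewrite mxE mulrDr. Qed.

Lemma dotvNl a x : dotv (- a) x = - dotv a x.
Proof. by rewrite /dotv -sumrN; apply: eq_bigr => i _; rewrite mxE mulNr. Qed.

Lemma dotvNr a x : dotv a (- x) = - dotv a x.
Proof. by rewrite /dotv -sumrN; apply: eq_bigr => i _; rewrite mxE mulrN. Qed.

Lemma dotvZr a c x : dotv a (c *: x) = c * dotv a x.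
Proof. by rewrite /dotv mulr_sumr; apply: eq_bigr => i _; rewrite mxE mulrCA. Qed.

Lemma dotvBr a x y : dotv a (x - y) = dotv a x - dotv a y.
Proof. by rewrite dotvDr dotvNr. Qed.

Lemma dotv_mulmxr a x (M : 'M[R]_n) : dotv a (x *m M) = dotv (a *m M^T) x.
Proof.
rewrite /dotv; under eq_bigr do rewrite mxE big_distrr.
rewrite exchange_big; apply: eq_bigr => j _.
rewrite mxE big_distrl; apply: eq_bigr => i _.
by rewrite !mxE /= mulrA -!mulrA [M j i * _]mulrC.
Qed.

Lemma continuous_dotv a : continuous (dotv a).
Proof.
rewrite /dotv; elim: (index_enum _) => [|i s IHs] w.
  by under [X in continuous_at _ X]funext do rewrite big_nil; exact: cst_continuous.
under [X in continuous_at _ X]funext do rewrite big_cons.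
exact: (continuousD (continuousM (@cst_continuous _ _ (a 0 i) w)
  (@coord_continuous R 1 n 0 i w)) (IHs w)).
Qed.

End DotProduct.

Lemma connected_component_dotv_gt0 (R : realType) n (Phi : seq 'rV[R]_n) a u w :
  a \in Phi -> connected_component (regular_set Phi) u w ->
  0 < dotv a u -> 0 < dotv a w.
Proof.
move=> aPhi Cw au_gt0.
set C := connected_component (regular_set Phi) u.
have Cu : C u.
  apply: connected_component_refl; apply: contrapT => /connected_component_out uC.
  by move: Cw; rewrite /C uC.
have /connected_intervalP dotv_C_itv : connected (dotv a @` C).
  apply: connected_continuous_connected; first exact: component_connected.
  exact/continuous_subspaceT/continuous_dotv.
rewrite ltNge; apply/negP => aw_le0.
have [z Cz z0] : (dotv a @` C) 0.
  by apply: (dotv_C_itv (dotv a w) (dotv a u)); [exists w|exists u|rewrite aw_le0 ltW].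
by have := connected_component_sub Cz _ aPhi; rewrite z0 eqxx.
Qed.

(* The coordinates of b as the coefficients of a polynomial, so that (b|x) at
   the point x = (t^i)_i of the moment curve is this polynomial evaluated at t. *)
Definition coord_poly {R : ringType} {n : nat} (b : 'rV[R]_n) : {poly R} :=
  \poly_(k < n) oapp (fun i : 'I_n => b 0 i) 0 (insub k).

Lemma coord_poly_eq0 (R : ringType) n (b : 'rV[R]_n) : (coord_poly b == 0) = (b == 0).
Proof.
apply/eqP/eqP => [b0|->]; last first.
  by apply/polyP => k; rewrite coef_poly coef0; case: insub => [i|] /=; rewrite ?mxE if_same.
apply/matrixP => i j; rewrite (ord1 i) mxE.
by have := congr1 (fun p : {poly R} => p`_j) b0; rewrite coef_poly ltn_ord coef0 valK.
Qed.

Lemma dotv_moment_curve (R : realType) n (b : 'rV[R]_n) t :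
  dotv b (\row_i (t ^+ i)) = (coord_poly b).[t].
Proof. by rewrite horner_poly /dotv; apply: eq_bigr => i _; rewrite mxE valK. Qed.

Lemma exists_dotv_neq0 (R : realType) n (B : seq 'rV[R]_n) :
  (forall b, b \in B -> b != 0) -> exists x, forall b, b \in B -> dotv b x != 0.
Proof.
move=> B_neq0; pose p := \prod_(b <- B) coord_poly b.
have p_neq0 : p != 0.
  by rewrite prodf_seq_neq0; apply/allP => b /B_neq0; rewrite coord_poly_eq0.
have [t pt_neq0] : exists t, p.[t] != 0.
  apply: contrapT => p_roots; move/eqP: p_neq0; apply.
  apply: (@roots_geq_poly_eq0 _ p [seq k%:R | k <- iota 0 (size p)]).
  - apply/allP => y /mapP [k _ ->]; apply/rootP/eqP.
    by apply: contraT => pk_neq0; case: p_roots; exists k%:R.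
  - by rewrite map_inj_uniq ?iota_uniq //; exact: (mulrIn (oner_neq0 R)).
  - by rewrite size_map size_iota.
exists (\row_i (t ^+ i)) => b bB; rewrite dotv_moment_curve.
by move: pt_neq0; rewrite /p horner_prod prodf_seq_neq0 => /allP/(_ b bB).
Qed.

Lemma exists_small_pos (R : realFieldType) (T : eqType) (s : seq T) (f g : T -> R) :
  (forall i, i \in s -> f i != 0) ->
  exists2 e, 0 < e & forall i, i \in s -> e * `|g i| < `|f i|.
Proof.
elim: s => [|i s IHs] f_neq0; first by exists 1.
have [|e e_gt0 small_e] := IHs; first by move=> j js; apply: f_neq0; rewrite inE js orbT.
have fi_gt0 : 0 < `|f i| by rewrite normr_gt0 f_neq0 ?mem_head.
pose e' := Num.min e (`|f i| / (`|g i| + 1)).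
have gi1_gt0 : 0 < `|g i| + 1 by rewrite ltr_wpDl.
exists e'; first by rewrite lt_min e_gt0 divr_gt0.
move=> j; rewrite inE => /predU1P [->|js].
  apply: (@le_lt_trans _ _ (`|f i| / (`|g i| + 1) * `|g i|)).
    by rewrite ler_wpM2r // ge_min lexx orbT.
  by rewrite mulrAC ltr_pdivrMr // ltr_pM2l // ltrDl.
apply: le_lt_trans (small_e j js).
by rewrite ler_wpM2r // ge_min lexx.
Qed.

Lemma orthogonal_involution_sym (R : ringType) n (S : 'M[R]_n) :
  S *m S^T = 1%:M -> S *m S = 1%:M -> S^T = S.
Proof. by move=> SST SS; rewrite -[S^T]mul1mx -SS -mulmxA SST mulmx1. Qed.

Section TiltedPoint.
Variables (R : realType) (n : nat) (S : 'M[R]_n).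
Hypotheses (S_sym : S^T = S) (S_inv : S *m S = 1%:M).
Variables (x : 'rV[R]_n) (e : R).

Definition tilted_point := (x + x *m S) + e *: (x - x *m S).

Local Notation A a := (dotv (a + a *m S) x).
Local Notation Q a := (dotv (a - a *m S) x).

Lemma dotv_mulmx_sym a y : dotv a (y *m S) = dotv (a *m S) y.
Proof. by rewrite dotv_mulmxr S_sym. Qed.

Lemma dotv_tilted_point a : dotv a tilted_point = A a + e * Q a.
Proof.
rewrite /tilted_point dotvDr dotvZr dotvDr dotvBr !dotv_mulmx_sym.
by rewrite !dotvDl !dotvNl.
Qed.

Lemma dotv_mulmx_tilted_point a : dotv (a *m S) tilted_point = A a - e * Q a.
Proof.
rewrite dotv_tilted_point -mulmxA S_inv mulmx1 !dotvDl !dotvNl; ring.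
Qed.

Lemma dotv_tilted_point_sign a : `|e * Q a| < `|A a| ->
  0 < dotv a tilted_point * dotv (a *m S) tilted_point.
Proof.
move=> small_e; rewrite dotv_tilted_point dotv_mulmx_tilted_point.
have -> : (A a + e * Q a) * (A a - e * Q a) = `|A a| ^+ 2 - `|e * Q a| ^+ 2.
  by rewrite !real_normK ?num_real //; ring.
by rewrite subr_gt0 ltr_pXn2r ?nnegrE.
Qed.

Lemma dotv_tilted_point_anti a : a *m S = - a -> dotv a tilted_point = e *+ 2 * dotv a x.
Proof.
by move=> aS; rewrite dotv_tilted_point aS subrr opprK dotv0l dotvDl; ring.
Qed.

Lemma tilted_point_regular (Phi : seq 'rV[R]_n) :
  0 < e -> (forall a, a \in Phi -> dotv a x != 0) ->
  (forall a, a \in Phi -> a *m S != - a -> `|e * Q a| < `|A a|) ->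
  regular_set Phi tilted_point.
Proof.
move=> e_gt0 x_generic small_e a aPhi.
have [aS|aS_neq] := eqVneq (a *m S) (- a).
  rewrite dotv_tilted_point_anti // mulf_neq0 ?x_generic //.
  by rewrite gt_eqF // pmulrn_rgt0.
have := dotv_tilted_point_sign (small_e a aPhi aS_neq).
by apply: contraTneq => ->; rewrite mul0r ltxx.
Qed.

Lemma tilted_point_mulmx_gt0 a : `|e * Q a| < `|A a| ->
  0 < dotv a tilted_point -> 0 < dotv (a *m S) tilted_point.
Proof. by move=> /dotv_tilted_point_sign + a_gt0; rewrite pmulr_rgt0. Qed.

End TiltedPoint.

Theorem theorem3p10 (R : realType) (n : nat) (Phi : seq 'rV[R]_n) (S : 'M[R]_n) :
  root_system Phi -> in_I Phi S ->
  exists C : set 'rV[R]_n,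
    weyl_chamber Phi C /\
    (forall a, pos_roots Phi C a -> Phi_star Phi S a -> pos_roots Phi C (a *m S)).
Proof.
move=> [[_ Phi_neq0] _ _ _ _] [[SST SPhi] SS].
have S_sym := orthogonal_involution_sym SST SS.
pose Phi_moved := [seq a <- Phi | a *m S != - a].
pose B := Phi ++ [seq a + a *m S | a <- Phi_moved].
have B_neq0 b : b \in B -> b != 0.
  rewrite mem_cat => /orP [bPhi|/mapP [a]].
    by apply: contraNneq Phi_neq0 => <-.
  by rewrite mem_filter => /andP [aS _] ->; rewrite addrC addr_eq0.
have [x x_generic] := exists_dotv_neq0 B_neq0.
have A_neq0 a : a \in Phi_moved -> dotv (a + a *m S) x != 0.
  by move=> a_moved; apply: x_generic; rewrite mem_cat; apply/orP; right; exact: map_f.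
have [e e_gt0 small_e] :=
  exists_small_pos (fun a => dotv (a - a *m S) x) A_neq0.
have {}small_e a : a \in Phi -> a *m S != - a ->
    `|e * dotv (a - a *m S) x| < `|dotv (a + a *m S) x|.
  by move=> aPhi aS; rewrite normrM gtr0_norm ?small_e ?mem_filter ?aS.
have u_regular : regular_set Phi (tilted_point S x e).
  by apply: tilted_point_regular => // a aPhi; rewrite x_generic ?mem_cat ?aPhi.
exists (connected_component (regular_set Phi) (tilted_point S x e)).
split=> [|a [aPhi a_pos] [_ [_ /eqP aS]]]; first by exists (tilted_point S x e).
split=> [|w Cw]; first exact: SPhi.
apply: connected_component_dotv_gt0 (SPhi a aPhi) Cw _.
apply: (tilted_point_mulmx_gt0 S_sym SS (small_e a aPhi aS)).
exact/a_pos/connected_component_refl.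
Qed.
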